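(* Let $A$ be an $n\times n$ binary matrix with zero diagonal and $\widetilde A=A+I_n$. The facets-pairing structure $\mathcal{F}_A$ on $\mathcal{C}^n$ is strong if and only if for all $1\le j_1<\dots<j_s\le n$ one has $\mathrm{rank}_{\mathbb{Z}_2}\big(\widetilde A^{j_1\cdots j_s}_{j_1\cdots j_s}\big)=\mathrm{rank}_{\mathbb{Z}_2}\big(\widetilde A^{j_1\cdots j_s}\big)$.
   Context: $\mathcal{C}^n=\{x\in\mathbb{R}^n: -\tfrac14\le x_i\le\tfrac14\}$; $\mathbf{F}(i)$, $\mathbf{F}(-i)$ ($1\le i\le n$) are the facets in $\{x_i=\tfrac14\}$, $\{x_i=-\tfrac14\}$. Binary matrices have entries in $\mathbb{Z}_2$; $A^i_k$ denotes the $(i,k)$ entry viewed as $0$ or $1$. For $1\le j_1<\dots<j_s\le n$, $\widetilde A^{j_1\cdots j_s}$ is the $s\times n$ submatrix of $\widetilde A$ formed by rows $j_1,\dots,j_s$, and $\widetilde A^{j_1\cdots j_s}_{j_1\cdots j_s}$ is the $s\times s$ principal submatrix on rows and columns $j_1,\dots,j_s$. $\mathcal{F}_A$ pairs $\mathbf{F}(j)$ with $\mathbf{F}(-j)$ via $\tau^A_j:\mathbf{F}(j)\to\mathbf{F}(-j)$, $\tau^A_j(x)=y$ with $y_{|j|}=-x_{|j|}$ and $y_k=(-1)^{A^{|j|}_k}x_k$ for $k\ne|j|$. A composition $\tau^A_{k_m}\circ\dots\circ\tau^A_{k_1}$ applied to a proper face $f$ is valid if $f\subset\mathbf{F}(k_1)$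 and $\tau^A_{k_i}\circ\dots\circ\tau^A_{k_1}(f)\subset\mathbf{F}(k_{i+1})$ for $1\le i<m$ ($m=0$ allowed, giving the identity). For a proper face $f$ let $\Xi(f)$ be the set of facets containing $f$; if $f\subset\mathbf{F}(k)$ and $f'=\tau^A_k(f)$, define $\Psi^f_k:\Xi(f)\to\Xi(f')$ by $\Psi^f_k(\mathbf{F}(k))=\mathbf{F}(-k)$ and, for $F'\in\Xi(f)\setminus\{\mathbf{F}(k)\}$, $\Psi^f_k(F')$ is the facet $G$ with $G\cap\mathbf{F}(-k)=\tau^A_k(F'\cap\mathbf{F}(k))$. $\mathcal{F}_A$ is strong if for every proper face $f$ and any two valid compositions mapping $f$ onto the same face $\widetilde f$: (a) they agree at every point of $f$; and (b) the corresponding composites of the maps $\Psi$ along the two compositions coincide as maps $\Xi(f)\to\Xi(\widetilde f)$. *)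

From HB Require Import structures.
From mathcomp Require Import all_boot all_order all_algebra.
Set Implicit Arguments. Unset Strict Implicit. Unset Printing Implicit Defensive.
Import Order.TTheory GRing.Theory Num.Theory.
Local Open Scope ring_scope.

Section Cube.
Variables (R : realFieldType) (n : nat).

Definition point := 'I_n -> R.

Definition quarter : R := (4%:R)^-1.
Definition sgn (b : bool) : R := if b then 1 else -1.

Definition in_cube (x : point) : Prop := forall i, - quarter <= x i <= quarter.

(* Signed indices: (i, true) stands for i, (i, false) for -i. *)
Definition sidx := ('I_n * bool)%type.
Definition sneg (k : sidx) : sidx := (k.1, ~~ k.2).

Definition in_facet (k : sidx) (x : point) : Prop :=
  in_cube x /\ x k.1 = sgn k.2 * quarter.

(* Nonempty faces of the cube: each coordinate is fixed to +1/4 (Some true),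
   to -1/4 (Some false), or free (None). *)
Definition face := {ffun 'I_n -> option bool}.
Definition in_face (f : face) (x : point) : Prop :=
  in_cube x /\ forall i b, f i = Some b -> x i = sgn b * quarter.
Definition proper_face (f : face) : Prop := exists i, f i != None.

Definition tau (A : 'M['F_2]_n) (k : sidx) (x : point) : point :=
  fun i => if i == k.1 then - x i else if A k.1 i != 0 then - x i else x i.

(* composition tau_{k_m} o ... o tau_{k_1} for s = [:: k_1; ...; k_m] *)
Definition comp (A : 'M['F_2]_n) (s : seq sidx) (x : point) : point :=
  foldl (fun y k => tau A k y) x s.

Definition img (A : 'M['F_2]_n) (k : sidx) (P : point -> Prop) : point -> Prop :=
  fun y => exists2 x, P x & tau A k x = y.

Fixpoint valid_on (A : 'M['F_2]_n) (P : point -> Prop) (s : seq sidx) : Prop :=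
  match s with
  | [::] => True
  | k :: s' => (forall x, P x -> in_facet k x) /\ valid_on A (img A k P) s'
  end.

Definition valid (A : 'M['F_2]_n) (s : seq sidx) (f : face) : Prop :=
  valid_on A (in_face f) s.

Definition maps_onto (A : 'M['F_2]_n) (s : seq sidx) (f g : face) : Prop :=
  forall y, in_face g y <-> exists2 x, in_face f x & comp A s x = y.

Definition Xi (f : face) (F : sidx) : Prop := forall x, in_face f x -> in_facet F x.

(* graph of Psi^f_k : Psi(F(k)) = F(-k); otherwise Psi(F') = G with
   G ∩ F(-k) = tau_k (F' ∩ F(k)) *)
Definition Psi (A : 'M['F_2]_n) (k F G : sidx) : Prop :=
  (F = k /\ G = sneg k) \/
  (F <> k /\ forall y, (in_facet G y /\ in_facet (sneg k) y) <->
                       exists2 x, in_facet F x /\ in_facet k x & tau A k x = y).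

Fixpoint PsiComp (A : 'M['F_2]_n) (s : seq sidx) (F G : sidx) : Prop :=
  match s with
  | [::] => F = G
  | k :: s' => exists2 H, Psi A k F H & PsiComp A s' H G
  end.

Definition strong (A : 'M['F_2]_n) : Prop :=
  forall (f g : face) (s1 s2 : seq sidx),
    proper_face f ->
    valid A s1 f -> valid A s2 f ->
    maps_onto A s1 f g -> maps_onto A s2 f g ->
    (forall x, in_face f x -> comp A s1 x = comp A s2 x) /\
    (forall F G, Xi f F -> (PsiComp A s1 F G <-> PsiComp A s2 F G)).

End Cube.

Definition rows_sub (F : fieldType) n (M : 'M[F]_n) (S : {set 'I_n}) :
  'M[F]_(#|S|, n) := rowsub (fun i : 'I_#|S| => enum_val i) M.
Definition principal_sub (F : fieldType) n (M : 'M[F]_n) (S : {set 'I_n}) :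
  'M[F]_#|S| := mxsub (fun i : 'I_#|S| => enum_val i)
                      (fun i : 'I_#|S| => enum_val i) M.

(* Since A has zero diagonal, tau^A_k negates exactly the coordinates in the support
   of row |k| of A + I. Hence a composition along k_1, ..., k_m acts on points, faces
   and facets alike as the sign change by the F_2-sum v of the rows |k_1|, ..., |k_m|
   of A + I, and so do the composed maps Psi. Validity on a face f only requires the
   |k_i| to lie in the set S of coordinates fixed by f, and every such sequence of
   indices occurs in a valid composition. Two valid compositions map f onto the same
   face iff their vectors agree on S, so F_A is strong iff no nonzero vector of the
   row space of the rows S of A + I vanishes on S; this says that restricting these
   rows to the columns S does not lower their rank. *)

From Pilot Require Import Defs.
From HB Require Import structures.
From mathcomp Require Import all_boot all_order all_algebra.
From Stdlib Require Import FunctionalExtensionality.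
Import Order.TTheory GRing.Theory Num.Theory.
Set Implicit Arguments. Unset Strict Implicit. Unset Printing Implicit Defensive.
Local Open Scope ring_scope.

Lemma F2_neq0 (a : 'F_2) : (a != 0) = (a == 1).
Proof. by case: a => [[|[|?]] ?]. Qed.

Lemma F2_nzD (a b : 'F_2) : (a + b != 0) = (a != 0) (+) (b != 0).
Proof. by case: a b => [[|[|?]] ?] [[|[|?]] ?]. Qed.

Section Submatrices.
Variables (F : fieldType) (n : nat) (M : 'M[F]_n) (S : {set 'I_n}).

Let select_S : 'M[F]_(n, #|S|) := colsub (fun j : 'I_#|S| => enum_val j) 1%:M.

Lemma principal_subE : principal_sub M S = rows_sub M S *m select_S.
Proof. by rewrite mulmx_colsub mulmx1; apply/matrixP => i j; rewrite !mxE. Qed.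

Lemma rank_principal_subP :
  \rank (principal_sub M S) = \rank (rows_sub M S) <->
  forall d : 'rV_n, (d <= rows_sub M S)%MS -> {in S, forall i, d 0 i = 0} -> d = 0.
Proof.
have kerP (d : 'rV_n) :
    (d <= kermx select_S)%MS = [forall j : 'I_#|S|, d 0 (enum_val j) == 0].
  rewrite sub_kermx mulmx_colsub mulmx1; apply/eqP/forallP => [/rowP dS j|dS].
    by have := dS j; rewrite !mxE => ->.
  by apply/rowP => j; rewrite !mxE; apply/eqP.
rewrite principal_subE; split=> [/mxrank_injP/rowV0P capP d dS d0 | dP].
  apply: capP; rewrite sub_capmx dS kerP; apply/forallP => j.
  by rewrite d0 ?enum_valP.
apply/mxrank_injP/rowV0P => d; rewrite sub_capmx kerP => /andP[dS /forallP d0].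
apply: dP => // i Si; rewrite -(enum_rankK_in Si Si); exact/eqP/d0.
Qed.

Lemma sum_rows_sub (js : seq 'I_n) :
  {subset js <= S} -> ((\sum_(j <- js) row j M)%R <= rows_sub M S)%MS.
Proof.
move=> jsS; rewrite big_seq; apply: summx_sub => j /jsS Sj.
by rewrite -(enum_rankK_in Sj Sj) -row_rowsub row_sub.
Qed.

End Submatrices.

Lemma sub_rows_sub_F2 n (M : 'M['F_2]_n) (S : {set 'I_n}) (d : 'rV_n) :
  (d <= rows_sub M S)%MS ->
  exists2 js : seq 'I_n, {subset js <= S} & d = \sum_(j <- js) row j M.
Proof.
case/submxP => u ->; rewrite mulmx_sum_row.
exists [seq enum_val j | j <- [seq j <- index_enum 'I_#|S| | u 0 j != 0]].
  by move=> i /mapP[j _ ->]; apply: enum_valP.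
rewrite big_map big_filter [RHS]big_mkcond; apply: eq_bigr => j _.
rewrite row_rowsub F2_neq0; case: eqP => [->|/eqP]; first by rewrite scale1r.
by rewrite -F2_neq0 negbK => /eqP ->; rewrite scale0r.
Qed.

Section Cube.
Variables (R : realFieldType) (n : nat).
Local Notation point := (point R n).
Local Notation q := (quarter R).

Lemma quarter_gt0 : 0 < q.
Proof. by rewrite invr_gt0 ltr0n. Qed.

Lemma sgnq_neq0 b : sgn R b * q != 0.
Proof. by case: b; rewrite /sgn ?mul1r ?mulN1r ?oppr_eq0 gt_eqF ?quarter_gt0. Qed.

Lemma oppr_sgnq b : - (sgn R b * q) = sgn R (~~ b) * q.
Proof. by case: b; rewrite /sgn ?mulN1r ?mul1r ?opprK. Qed.

Lemma sgnq_inj : injective (fun b => sgn R b * q).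
Proof.
have q_neq0 := gt_eqF quarter_gt0.
move=> [] [] //= /eqP; rewrite /sgn mul1r mulN1r; last by rewrite eqNr q_neq0.
by rewrite eq_sym eqNr q_neq0.
Qed.

Lemma sgnq_in_range b : - q <= sgn R b * q <= q.
Proof.
have q_ge0 := ltW quarter_gt0.
by case: b; rewrite /sgn ?mul1r ?mulN1r lexx /= ?andbT ge0_cp.
Qed.

Lemma zero_in_range : - q <= 0 <= q.
Proof. by rewrite oppr_le0 ltW ?quarter_gt0. Qed.

Definition flip_point (v : 'rV['F_2]_n) (x : point) : point :=
  fun i => if v 0 i != 0 then - x i else x i.

Definition flip_face (v : 'rV['F_2]_n) (f : face n) : face n :=
  [ffun i => if v 0 i != 0 then omap negb (f i) else f i].

Definition flip_sidx (v : 'rV['F_2]_n) (k : sidx n) : sidx n :=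
  (k.1, k.2 (+) (v 0 k.1 != 0)).

Lemma flip_pointK v : involutive (flip_point v).
Proof.
move=> x; apply: functional_extensionality => i.
by rewrite /flip_point /=; case: (v 0 i != 0); rewrite ?opprK.
Qed.

Lemma flip_faceK v : involutive (flip_face v).
Proof.
move=> f; apply/ffunP => i; rewrite !ffunE.
by case: (v 0 i != 0) => //; case: (f i) => //= b; rewrite negbK.
Qed.

Lemma flip_sidxK v : involutive (flip_sidx v).
Proof. by case=> i b; rewrite /flip_sidx /= -addbA addbb addbF. Qed.

Lemma flip_point_add v w x : flip_point v (flip_point w x) = flip_point (w + v) x.
Proof.
apply: functional_extensionality => i; rewrite /flip_point mxE F2_nzD.
by case: (w 0 i != 0); case: (v 0 i != 0); rewrite ?opprK.
Qed.

Lemma flip_face_add v w f : flip_face v (flip_face w f) = flip_face (w + v) f.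
Proof.
apply/ffunP => i; rewrite !ffunE mxE F2_nzD.
by case: (w 0 i != 0); case: (v 0 i != 0) => //=; case: (f i) => //= b; rewrite negbK.
Qed.

Lemma flip_sidx_add v w k : flip_sidx v (flip_sidx w k) = flip_sidx (w + v) k.
Proof. by rewrite /flip_sidx /= mxE F2_nzD addbA. Qed.

Lemma flip_point0 x : flip_point 0 x = x.
Proof. by apply: functional_extensionality => i; rewrite /flip_point mxE eqxx. Qed.

Lemma flip_face0 f : flip_face 0 f = f.
Proof. by apply/ffunP => i; rewrite ffunE mxE eqxx. Qed.

Lemma flip_sidx0 k : flip_sidx 0 k = k.
Proof. by case: k => i b; rewrite /flip_sidx /= mxE eqxx addbF. Qed.

Lemma flip_point_in_cube v x : in_cube x -> in_cube (flip_point v x).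
Proof.
by move=> xC i; rewrite /flip_point; case: ifP => // _; rewrite lerNl opprK andbC lerNl.
Qed.

Lemma flip_point_in_face v f x : in_face f x -> in_face (flip_face v f) (flip_point v x).
Proof.
case=> xC xf; split=> [|i b]; first exact: flip_point_in_cube.
rewrite ffunE /flip_point; case: ifP => _; last exact: xf.
by case fi: (f i) => [c|] //= [<-]; rewrite (xf _ _ fi) oppr_sgnq.
Qed.

Lemma flip_point_in_facet v k x : in_facet k x -> in_facet (flip_sidx v k) (flip_point v x).
Proof.
case=> xC xk; split; first exact: flip_point_in_cube.
by rewrite /flip_point /= xk; case: ifP; rewrite ?oppr_sgnq ?addbT ?addbF.
Qed.

Lemma in_face_flip v f y : in_face (flip_face v f) y <-> in_face f (flip_point v y).
Proof.
split; first by move/(flip_point_in_face v); rewrite flip_faceK.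
by move/(flip_point_in_face v); rewrite flip_pointK.
Qed.

Lemma in_facet_flip v k y : in_facet (flip_sidx v k) y <-> in_facet k (flip_point v y).
Proof.
split; first by move/(flip_point_in_facet v); rewrite flip_sidxK.
by move/(flip_point_in_facet v); rewrite flip_pointK.
Qed.

Lemma flip_face_image v f y :
  (exists2 x, in_face f x & flip_point v x = y) <-> in_face (flip_face v f) y.
Proof.
split=> [[x fx <-]|/in_face_flip fy]; first by apply/in_face_flip; rewrite flip_pointK.
by exists (flip_point v y); rewrite ?flip_pointK.
Qed.

Definition face_point (f : face n) : point :=
  fun i => if f i is Some b then sgn R b * q else 0.

Lemma in_face_point f : in_face f (face_point f).
Proof.
split=> [i|i b fi]; last by rewrite /face_point fi.
by rewrite /face_point; case: (f i) => [b|]; rewrite ?sgnq_in_range ?zero_in_range.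
Qed.

Lemma face_point_fixed f i b : face_point f i = sgn R b * q -> f i = Some b.
Proof.
rewrite /face_point; case: (f i) => [c /sgnq_inj -> //|/eqP].
by rewrite eq_sym (negbTE (sgnq_neq0 b)).
Qed.

Lemma face_ext f g : (forall x : point, in_face f x <-> in_face g x) -> f = g.
Proof.
move=> fg; apply/ffunP => i.
have [_ gf] := proj1 (fg _) (in_face_point f).
have [_ fg'] := proj2 (fg _) (in_face_point g).
case fi: (f i) => [b|]; first exact/esym/face_point_fixed/fg'.
by case gi: (g i) => [b|] //; move: (face_point_fixed (gf _ _ gi)); rewrite fi.
Qed.

Lemma face_sub_facetP f k :
  (forall x : point, in_face f x -> in_facet k x) <-> f k.1 = Some k.2.
Proof.
split=> [fk|fk x [xC xf]]; last by split; [|apply: xf].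
by case: (fk _ (in_face_point f)) => _ /face_point_fixed.
Qed.

Definition face_support (f : face n) : {set 'I_n} := [set i | f i != None].

Lemma face_support_flip v f : face_support (flip_face v f) = face_support f.
Proof. by apply/setP => i; rewrite !inE ffunE; case: (_ != 0) => //; case: (f i). Qed.

Lemma flip_face_fixed v f :
  flip_face v f = f <-> {in face_support f, forall i, v 0 i = 0}.
Proof.
split=> [/ffunP vf i|v0].
  rewrite inE; have := vf i; rewrite ffunE.
  by case: (f i) => // b; case: eqP => // _ []; case: b.
apply/ffunP => i; rewrite ffunE; case fi: (f i) => [b|]; last by case: ifP.
by rewrite v0 ?eqxx // inE fi.
Qed.

Lemma flip_point_fixed v x : (forall i, x i != 0) -> flip_point v x = x -> v = 0.
Proof.
move=> x_neq0 vx; apply/rowP => i; rewrite mxE.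
have := congr1 (fun y : point => y i) vx; rewrite /flip_point.
by case: eqP => // _ /eqP; rewrite eqNr (negbTE (x_neq0 i)).
Qed.

Lemma sidx_split (F K : sidx n) : F.1 = K.1 -> F = K \/ F = sneg K.
Proof. by case: F K => [i b] [j c] /= ->; rewrite /sneg /=; case: b; case: c; auto. Qed.

Definition corner (G K : sidx n) : point :=
  fun i => if i == G.1 then sgn R G.2 * q else if i == K.1 then sgn R K.2 * q else 0.

Lemma corner_in_cube G K : in_cube (corner G K).
Proof.
move=> i; rewrite /corner.
by case: ifP; last case: ifP; rewrite ?sgnq_in_range ?zero_in_range.
Qed.

Lemma in_facet_corner_l G K : in_facet G (corner G K).
Proof. by split; [apply: corner_in_cube | rewrite /corner /= eqxx]. Qed.

Lemma in_facet_corner_r G K : G.1 != K.1 -> in_facet K (corner G K).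
Proof.
by move=> GK; split; [apply: corner_in_cube | rewrite /corner /= eq_sym (negbTE GK) eqxx].
Qed.

Lemma corner_in_facet H G K : in_facet H (corner G K) -> H = G \/ H = K.
Proof.
case: H G K => [h c] [g d] [k e] [_]; rewrite /corner /=.
case: eqP => [-> /sgnq_inj ->|_]; first by left.
case: eqP => [-> /sgnq_inj ->|_]; first by right.
by move/eqP; rewrite eq_sym (negbTE (sgnq_neq0 _)).
Qed.

Lemma facet_meet_inj G H K :
  (forall y : point, in_facet G y /\ in_facet K y <-> in_facet H y /\ in_facet K y) ->
  G = H.
Proof.
have KK := in_facet_corner_l K K.
have key G' H' :
    (forall y : point, in_facet G' y /\ in_facet K y <-> in_facet H' y /\ in_facet K y) ->
    G' = K \/ G'.1 != K.1 -> G' = H'.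
  move=> GH [GK|GK].
    rewrite GK in GH *.
    by have [/corner_in_facet [] ->] := proj1 (GH _) (conj KK KK).
  have [/corner_in_facet [-> //|HK] _] :=
    proj1 (GH _) (conj (in_facet_corner_l G' K) (in_facet_corner_r GK)).
  rewrite HK in GH; have [/corner_in_facet [] GK' _] := proj2 (GH _) (conj KK KK);
    by rewrite GK' eqxx in GK.
move=> GH; case: (eqVneq G.1 K.1) => [/sidx_split [GK|GK]|GK]; try by apply: key; auto.
have HG (y : point) : in_facet H y /\ in_facet K y <-> in_facet G y /\ in_facet K y.
  exact: iff_sym (GH y).
case: (eqVneq H.1 K.1) => [/sidx_split [HK|HK]|HK].
- by symmetry; apply: key HG _; left.
- by rewrite GK HK.
- by symmetry; apply: key HG _; right.
Qed.

End Cube.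

Section Pairing.
Variables (R : realFieldType) (n : nat) (A : 'M['F_2]_n).
Hypothesis A_diag0 : forall i, A i i = 0.
Local Notation point := (point R n).

Definition flip_vec (s : seq (sidx n)) : 'rV['F_2]_n := \sum_(k <- s) row k.1 (A + 1%:M).

Lemma tauE k (x : point) : tau A k x = flip_point (row k.1 (A + 1%:M)) x.
Proof.
apply: functional_extensionality => i; rewrite /tau /flip_point !mxE.
case: eqP => [->|/eqP ik]; first by rewrite A_diag0 eqxx add0r oner_neq0.
by rewrite (eq_sym k.1) (negbTE ik) addr0.
Qed.

Lemma compE s (x : point) : Defs.comp A s x = flip_point (flip_vec s) x.
Proof.
elim: s x => [|k s IH] x; first by rewrite /flip_vec big_nil flip_point0.
by rewrite /Defs.comp /= -/(Defs.comp A s _) IH tauE flip_point_add /flip_vec big_cons.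
Qed.

Lemma flip_sidx_row k : flip_sidx (row k.1 (A + 1%:M)) k = sneg k.
Proof. by rewrite /flip_sidx !mxE A_diag0 eqxx add0r oner_neq0 addbT. Qed.

Lemma maps_ontoP s f g : maps_onto R A s f g <-> g = flip_face (flip_vec s) f.
Proof.
have imgE (y : point) : (exists2 x, in_face f x & Defs.comp A s x = y) <->
    in_face (flip_face (flip_vec s) f) y.
  apply: iff_trans (flip_face_image _ _ _).
  by split=> -[x fx <-]; exists x; rewrite ?compE.
split=> [fg|-> y]; last exact: iff_sym (imgE y).
by apply: (face_ext (R := R)) => y; apply: iff_trans (fg y) (imgE y).
Qed.

Lemma valid_on_ext (P Q : point -> Prop) s :
  (forall x, P x <-> Q x) -> valid_on A P s -> valid_on A Q s.
Proof.
elim: s P Q => [|k s IH] P Q //= PQ [Pk Ps]; split=> [x /PQ|]; first exact: Pk.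
by apply: IH Ps => y; split=> -[x /PQ Px <-]; exists x.
Qed.

Lemma valid_cons k s f :
  valid R A (k :: s) f <->
  f k.1 = Some k.2 /\ valid R A s (flip_face (row k.1 (A + 1%:M)) f).
Proof.
have imgE (y : point) :
    img A k (in_face f) y <-> in_face (flip_face (row k.1 (A + 1%:M)) f) y.
  apply: iff_trans (flip_face_image _ _ _).
  by split=> -[x fx <-]; exists x; rewrite ?tauE.
rewrite /valid /=; split=> -[fk fs]; split.
- exact/(face_sub_facetP R).
- by apply: valid_on_ext fs => y; apply: imgE.
- exact/(face_sub_facetP R).
- by apply: valid_on_ext fs => y; apply: iff_sym (imgE y).
Qed.

Lemma valid_support s f : valid R A s f -> {subset map fst s <= face_support f}.
Proof.
elim: s f => [|k s IH] f //= /valid_cons[fk /IH fs] i /predU1P[->|/fs].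
  by rewrite inE fk.
by rewrite face_support_flip.
Qed.

Lemma valid_exists f (js : seq 'I_n) :
  {subset js <= face_support f} -> exists2 s, valid R A s f & map fst s = js.
Proof.
elim: js f => [|j js IH] f jsf; first by exists [::].
have /[!inE] := jsf j (mem_head _ _); case fj: (f j) => [b|] // _.
have [|s vs <-] := IH (flip_face (row j (A + 1%:M)) f).
  by rewrite face_support_flip => i ijs; apply: jsf; rewrite inE ijs orbT.
by exists ((j, b) :: s) => //; apply/valid_cons.
Qed.

Lemma PsiP k F G : Psi R A k F G <-> G = flip_sidx (row k.1 (A + 1%:M)) F.
Proof.
set r := row k.1 (A + 1%:M).
have imgE (y : point) : (exists2 x, in_facet F x /\ in_facet k x & tau A k x = y) <->
    in_facet (flip_sidx r F) y /\ in_facet (sneg k) y.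
  rewrite -flip_sidx_row; split=> [[x [Fx kx] <-]|[/in_facet_flip Fy /in_facet_flip ky]].
    by rewrite tauE; split; apply/in_facet_flip; rewrite flip_pointK.
  by exists (flip_point r y); rewrite ?tauE ?flip_pointK.
split=> [[[-> ->]|[_ GF]]|->]; first by rewrite flip_sidx_row.
  by apply: (facet_meet_inj (K := sneg k)) => y; apply: iff_trans (GF y) (imgE y).
have [->|Fk] := eqVneq F k; first by left; rewrite flip_sidx_row.
by right; split=> [|y]; [apply/eqP | apply: iff_sym (imgE y)].
Qed.

Lemma PsiCompP s F G : PsiComp R A s F G <-> G = flip_sidx (flip_vec s) F.
Proof.
elim: s F G => [|k s IH] F G /=; first by rewrite /flip_vec big_nil flip_sidx0; split=> ->.
rewrite /flip_vec big_cons -/(flip_vec s) -flip_sidx_add.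
split=> [[H /PsiP -> /(IH _) //]|->].
by exists (flip_sidx (row k.1 (A + 1%:M)) F); [apply/PsiP | apply/IH].
Qed.

Lemma flip_vec_sub s f :
  valid R A s f -> (flip_vec s <= rows_sub (A + 1%:M) (face_support f))%MS.
Proof.
move/valid_support; rewrite /flip_vec -(big_map fst xpredT (fun j => row j (A + 1%:M))).
exact: sum_rows_sub.
Qed.

Lemma strong_of_rank_condition :
  (forall S, \rank (principal_sub (A + 1%:M) S) = \rank (rows_sub (A + 1%:M) S)) ->
  strong R A.
Proof.
move=> rankE f g s1 s2 _ v1 v2 /maps_ontoP e1 /maps_ontoP e2.
have flip_vecE : flip_vec s1 = flip_vec s2.
  apply/eqP; rewrite -subr_eq0; apply/eqP.
  apply: (proj1 (rank_principal_subP _ _) (rankE (face_support f))).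
    by rewrite addmx_sub ?eqmx_opp ?flip_vec_sub.
  by apply/flip_face_fixed; rewrite -flip_face_add -e1 e2 flip_face_add subrr flip_face0.
split=> [x _|F G _]; first by rewrite !compE flip_vecE.
by split=> /PsiCompP ->; apply/PsiCompP; rewrite flip_vecE.
Qed.

Lemma rank_condition_of_strong : strong R A ->
  forall S, \rank (principal_sub (A + 1%:M) S) = \rank (rows_sub (A + 1%:M) S).
Proof.
move=> st S; apply/rank_principal_subP => _ /sub_rows_sub_F2[[|j js] jsS ->] d0.
  by rewrite big_nil.
pose f : face n := [ffun i => if i \in S then Some true else None].
have suppf : face_support f = S by apply/setP => i; rewrite !inE ffunE; case: (i \in S).
have [s vs js_s] : exists2 s, valid R A s f & map fst s = j :: js.
  by apply: valid_exists; rewrite suppf.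
have dE : flip_vec s = \sum_(i <- j :: js) row i (A + 1%:M) by rewrite -js_s big_map.
have f_fixed : flip_face (flip_vec s) f = f by apply/flip_face_fixed; rewrite suppf dE.
have f_proper : proper_face f by exists j; rewrite ffunE jsS ?mem_head.
have f_top : in_face f (fun=> quarter R).
  split=> [i|i b]; first by have := sgnq_in_range R true; rewrite /sgn mul1r.
  by rewrite ffunE; case: (i \in S) => // -[<-]; rewrite /sgn mul1r.
have f_onto_s : maps_onto R A s f f by apply/maps_ontoP.
have f_onto_nil : maps_onto R A [::] f f.
  by apply/maps_ontoP; rewrite /flip_vec big_nil flip_face0.
have [/(_ _ f_top) + _] := st f f s [::] f_proper vs I f_onto_s f_onto_nil.
rewrite !compE /flip_vec big_nil flip_point0 -/(flip_vec s) -dE.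
by apply: flip_point_fixed => i; rewrite gt_eqF ?quarter_gt0.
Qed.

End Pairing.

Theorem mainTheorem13 (R : realFieldType) (n : nat) (A : 'M['F_2]_n) :
  (forall i, A i i = 0) ->
  (strong R A <->
   forall S : {set 'I_n},
     \rank (principal_sub (A + 1%:M) S) = \rank (rows_sub (A + 1%:M) S)).
Proof.
move=> A_diag0; split; [exact: rank_condition_of_strong | exact: strong_of_rank_condition].
Qed.
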